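(* Let $P=(p_1,\dots,p_n)$ be points in $\mathbb{R}^d$, $\mathcal{F}$ a constraint for $k$-CMedian, and $\mathcal{C}=\{c_1,\dots,c_k\}\subset\mathbb{R}^d$ with $\omega=\frac1n\sum_{i=1}^n\min_{c\in\mathcal{C}}\|p_i-c\|$. For each $i$ let $\tilde p_i$ be a point of $\mathcal{C}$ nearest to $p_i$, $\tilde P=(\tilde p_1,\dots,\tilde p_n)$, and $\tilde\mu_{opt}$ the optimal $k$-CMedian value of $\tilde P$. Let $\mu_{opt}([\mathcal{C}]^k)=\min_{(S_j)\in\mathcal{F}}\min_{(q_1,\dots,q_k)\in\mathcal{C}^k}\frac1n\sum_j\sum_{i\in S_j}\|p_i-q_j\|$. Then $\mu_{opt}([\mathcal{C}]^k)\le\omega+2\tilde\mu_{opt}$.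
   Context: A constraint for $k$-CMedian is a nonempty family $\mathcal{F}$ of ordered partitions $(S_1,\dots,S_k)$ of $\{1,\dots,n\}$ into $k$ parts. For a sequence $X=(x_1,\dots,x_n)$ its optimal $k$-CMedian value is $\min_{(S_j)\in\mathcal{F}}\min_{c'_1,\dots,c'_k\in\mathbb{R}^d}\frac1n\sum_j\sum_{i\in S_j}\|x_i-c'_j\|$. *)

From mathcomp Require Import all_boot all_order all_algebra.
From mathcomp Require Import boolp classical_sets reals.
Set Implicit Arguments. Unset Strict Implicit. Unset Printing Implicit Defensive.
Import Order.TTheory GRing.Theory Num.Theory.
Local Open Scope ring_scope.
Local Open Scope classical_set_scope.

Section Defs.
Variable R : realType.

Definition enorm (d : nat) (x : 'rV[R]_d) : R :=
  Num.sqrt (\sum_(i < d) x ord0 i ^+ 2).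

(* An ordered partition (S_1,...,S_k) of {1..n} is encoded by the assignment
   a : 'I_n -> 'I_k, with S_j = a^{-1}(j).  A constraint is a nonempty set of
   such assignments. *)

Definition cost (n k d : nat) (X : 'I_n -> 'rV[R]_d)
    (a : {ffun 'I_n -> 'I_k}) (c : 'I_k -> 'rV[R]_d) : R :=
  n%:R^-1 * \sum_(j < k) \sum_(i < n | a i == j) enorm (X i - c j).

Definition kcmedian_opt (n k d : nat) (F : {set {ffun 'I_n -> 'I_k}})
    (X : 'I_n -> 'rV[R]_d) : R :=
  inf [set v | exists a, a \in F /\ exists c : 'I_k -> 'rV[R]_d, v = cost X a c].

Definition restricted_opt (n k d : nat) (F : {set {ffun 'I_n -> 'I_k}})
    (X : 'I_n -> 'rV[R]_d) (C : 'I_k -> 'rV[R]_d) : R :=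
  inf [set v | exists a, a \in F /\ exists s : 'I_k -> 'I_k,
                 v = cost X a (fun j => C (s j))].

Definition omega (n k d : nat) (X : 'I_n -> 'rV[R]_d) (C : 'I_k -> 'rV[R]_d) : R :=
  n%:R^-1 * \sum_(i < n) inf [set enorm (X i - C j) | j in [set: 'I_k]].

End Defs.

From mathcomp Require Import all_boot all_order all_algebra.
From mathcomp Require Import boolp classical_sets reals.
From mathcomp Require Import lra ring.
Set Implicit Arguments. Unset Strict Implicit. Unset Printing Implicit Defensive.
Import Order.TTheory GRing.Theory Num.Theory.
Local Open Scope ring_scope.

(* Fix an assignment a in F and arbitrary centers c of the snapped points
   p~_i, and replace each c_j by a point q_j of C nearest to it.  For i in
   S_j the triangle inequality gives
     |p_i - q_j| <= |p_i - p~_i| + |p~_i - c_j| + |c_j - q_j|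
                 <= |p_i - p~_i| + 2 |p~_i - c_j|,
   since p~_i is itself a candidate for q_j.  Averaging over i bounds the
   cost of (a, q) by omega + 2 cost(a, c); taking the infimum over (a, c)
   yields the claim. *)

Section EuclideanNorm.
Variables (R : realType) (d : nat).
Implicit Types u v x y z : 'rV[R]_d.

Lemma CauchySchwarz_sum (x y : 'I_d -> R) :
  (\sum_i x i * y i) ^+ 2 <= (\sum_i x i ^+ 2) * (\sum_i y i ^+ 2).
Proof.
have lagrange_ge0 : 0 <= \sum_i \sum_j (x i * y j - x j * y i) ^+ 2.
  by apply: sumr_ge0 => i _; apply: sumr_ge0 => j _; exact: sqr_ge0.
have lagrange : \sum_i \sum_j (x i * y j - x j * y i) ^+ 2 =
    (\sum_i x i ^+ 2) * (\sum_i y i ^+ 2) + (\sum_i y i ^+ 2) * (\sum_i x i ^+ 2)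
    - 2 * ((\sum_i x i * y i) * (\sum_i x i * y i)).
  rewrite !big_distrl /= mulr_sumr -big_split /= -sumrB.
  apply: eq_bigr => i _; rewrite !big_distrr /= -big_split /= -sumrB.
  by apply: eq_bigr => j _; ring.
rewrite lagrange in lagrange_ge0; rewrite expr2; lra.
Qed.

Lemma enorm_ge0 u : 0 <= enorm u.
Proof. exact: sqrtr_ge0. Qed.

Lemma enormN u : enorm (- u) = enorm u.
Proof.
by rewrite /enorm; congr Num.sqrt; apply: eq_bigr => i _; rewrite mxE sqrrN.
Qed.

Lemma ler_enormD u v : enorm (u + v) <= enorm u + enorm v.
Proof.
rewrite /enorm.
set A := \sum_i u ord0 i ^+ 2; set B := \sum_i v ord0 i ^+ 2.
set S := \sum_i u ord0 i * v ord0 i.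
have A_ge0 : 0 <= A by apply: sumr_ge0 => i _; exact: sqr_ge0.
have B_ge0 : 0 <= B by apply: sumr_ge0 => i _; exact: sqr_ge0.
have -> : \sum_i (u + v) ord0 i ^+ 2 = A + B + 2 * S.
  rewrite /A /B /S mulr_sumr -!big_split /=; apply: eq_bigr => i _.
  by rewrite mxE; ring.
have S_le : S <= Num.sqrt A * Num.sqrt B.
  rewrite -sqrtrM // (le_trans (ler_norm S)) // -sqrtr_sqr.
  exact/ler_wsqrtr/CauchySchwarz_sum.
rewrite -(ger0_norm (addr_ge0 (sqrtr_ge0 A) (sqrtr_ge0 B))) -sqrtr_sqr.
apply: ler_wsqrtr; rewrite sqrrD !sqr_sqrtr //; lra.
Qed.

Lemma enorm_distrC x y : enorm (x - y) = enorm (y - x).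
Proof. by rewrite -enormN opprB. Qed.

Lemma ler_enorm_distD x y z : enorm (x - z) <= enorm (x - y) + enorm (y - z).
Proof. by have := ler_enormD (x - y) (y - z); rewrite addrA subrK. Qed.

Lemma ler_enorm_dist_nearest (p q c q' : 'rV[R]_d) :
  enorm (c - q') <= enorm (c - q) ->
  enorm (p - q') <= enorm (p - q) + 2 * enorm (q - c).
Proof.
move=> c_nearer_q'.
have := ler_enorm_distD p q q'; have := ler_enorm_distD q c q'.
rewrite [enorm (c - q)]enorm_distrC in c_nearer_q'; lra.
Qed.

End EuclideanNorm.

Section Costs.
Variables (R : realType) (n k d : nat).
Implicit Types (X : 'I_n -> 'rV[R]_d) (C c : 'I_k -> 'rV[R]_d).
Implicit Types (a : {ffun 'I_n -> 'I_k}) (F : {set {ffun 'I_n -> 'I_k}}).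

Lemma costE X a c : cost X a c = n%:R^-1 * \sum_i enorm (X i - c (a i)).
Proof.
rewrite /cost (partition_big a xpredT) //=; congr (_ * _).
by apply: eq_bigr => j _; apply: eq_bigr => i /eqP ->.
Qed.

Lemma cost_ge0 X a c : 0 <= cost X a c.
Proof.
rewrite costE mulr_ge0 ?invr_ge0 //.
by apply: sumr_ge0 => i _; exact: enorm_ge0.
Qed.

Lemma omega_nearest X C (near : 'I_n -> 'I_k) :
  (forall i j, enorm (X i - C (near i)) <= enorm (X i - C j)) ->
  omega X C = n%:R^-1 * \sum_i enorm (X i - C (near i)).
Proof.
move=> near_min; rewrite /omega; congr (_ * _); apply: eq_bigr => i _.
apply: le_anti; apply/andP; split.
- apply: ge_inf; last by exists (near i).
  by exists (enorm (X i - C (near i))) => _ [j _ <-]; exact: near_min.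
- apply: lb_le_inf; first by exists (enorm (X i - C (near i))), (near i).
  by move=> _ [j _ <-]; exact: near_min.
Qed.

Lemma restricted_opt_le_cost F X C a (s : 'I_k -> 'I_k) :
  a \in F -> restricted_opt F X C <= cost X a (fun j => C (s j)).
Proof.
move=> aF; apply: ge_inf; last by exists a; split => //; exists s.
by exists 0 => _ [b [_ [t ->]]]; exact: cost_ge0.
Qed.

Lemma exists_nearest_center C c :
  exists s : 'I_k -> 'I_k, forall j l, enorm (c j - C (s j)) <= enorm (c j - C l).
Proof.
exists (fun j => Order.arg_min j xpredT (fun l => enorm (c j - C l))) => j l.
by case: arg_minP => // m _; apply.
Qed.

End Costs.

Theorem lemma13 (R : realType) (n k d : nat)
  (F : {set {ffun 'I_n -> 'I_k}}) (HF : F != finset.set0)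
  (P : 'I_n -> 'rV[R]_d) (C : 'I_k -> 'rV[R]_d)
  (near : 'I_n -> 'I_k)
  (Hnear : forall (i : 'I_n) (j : 'I_k),
      enorm (P i - C (near i)) <= enorm (P i - C j)) :
  restricted_opt F P C
    <= omega P C + 2 * kcmedian_opt F (fun i => C (near i)).
Proof.
set Pt := fun i => C (near i).
have snap_bound a c : a \in F ->
    restricted_opt F P C <= omega P C + 2 * cost Pt a c.
  move=> aF; have [s s_nearest] := exists_nearest_center C c.
  apply: le_trans (restricted_opt_le_cost P C s aF) _.
  rewrite (omega_nearest Hnear) !costE mulrCA -mulrDr ler_wpM2l ?invr_ge0 //.
  rewrite mulr_sumr -big_split /=; apply: ler_sum => i _.
  exact: ler_enorm_dist_nearest.
suff : (restricted_opt F P C - omega P C) / 2 <= kcmedian_opt F Pt by lra.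
apply: lb_le_inf.
  have [a aF] := set0Pn _ HF.
  by exists (cost Pt a (fun _ => 0)), a; split => //; exists (fun _ => 0).
by move=> _ [a [aF [c ->]]]; have := snap_bound a c aF; lra.
Qed.
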